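(* Let $f:[0,\infty)\to\mathbb{R}$ be differentiable, let $0<a<b<\infty$, and suppose $f'$ is Lebesgue integrable on $[a,b]$. Let $m\in(0,1]$, $q>1$ and $0<p<q$, and suppose $|f'|^q$ is $(1,m)$-GA-convex on $[0,\max\{a^{1/m},b\}]$. Then \[ \biggl|\frac{b^2f(b)-a^2f(a)}{2}-\int_a^b xf(x)\,dx\biggr|\le\frac{(\ln b-\ln a)^{1-1/q}}{2}\Bigl(\frac{1}{3p}\Bigr)^{1/q}\bigl[L\bigl(a^{3(q-p)/(q-1)},b^{3(q-p)/(q-1)}\bigr)\bigr]^{1-1/q}\Bigl\{m\bigl[L(a^{3p},b^{3p})-a^{3p}\bigr]\bigl|f'(a^{1/m})\bigr|^q+\bigl[b^{3p}-L(a^{3p},b^{3p})\bigr]|f'(b)|^q\Bigr\}^{1/q}. \]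
   Context: For $c>0$, $h:[0,c]\to\mathbb{R}$ and $(\alpha,m)\in(0,1]^2$, $h$ is called $(\alpha,m)$-GA-convex on $[0,c]$ if $h\bigl(x^\lambda y^{m(1-\lambda)}\bigr)\le\lambda^\alpha h(x)+m(1-\lambda^\alpha)h(y)$ for all $x,y\in[0,c]$ and all $\lambda\in[0,1]$ (with the convention $0^0=1$). For $x,y>0$, $x\neq y$, the logarithmic mean is $L(x,y)=\frac{y-x}{\ln y-\ln x}$. *)

From Stdlib Require Import Reals Lra.
Open Scope R_scope.

(* Real power x^y for x >= 0, with the conventions 0^0 = 1 and 0^y = 0 for
   y <> 0 (Stdlib's Rpower 0 y = 1 for all y, which is wrong for y > 0). *)
Definition rpow (x y : R) : R :=
  if Req_EM_T x 0 then (if Req_EM_T y 0 then 1 else 0) else Rpower x y.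

Definition GA_convex (alpha m c : R) (h : R -> R) : Prop :=
  forall x y lam, 0 <= x <= c -> 0 <= y <= c -> 0 <= lam <= 1 ->
    h (rpow x lam * rpow y (m * (1 - lam)))
      <= rpow lam alpha * h x + m * (1 - rpow lam alpha) * h y.

Definition logmean (x y : R) : R := (y - x) / (ln y - ln x).

Definition right_deriv (f : R -> R) (x l : R) : Prop :=
  forall eps, 0 < eps -> exists delta, 0 < delta /\
    forall h, 0 < h < delta -> Rabs ((f (x + h) - f x) / h - l) < eps.

From Stdlib Require Import Reals Lra.
From Coquelicot Require Import Coquelicot.
Open Scope R_scope.

(* Put F(y) = y^2 f(y) - 2 ∫_a^y x f(x) dx, so that F'(x) = x^2 f'(x) and the
   left-hand side is |F(b) - F(a)| / 2.  With t(x) = (ln b - ln x)/(ln b - ln a)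
   we have x = b^(1-t) (a^(1/m))^(m t), so GA-convexity gives
   |f'(x)|^q <= w(x) := (1-t) |f'(b)|^q + m t |f'(a^(1/m))|^q.  Writing
   x^2 w^(1/q) = h1(x)^(1-1/q) h2(x)^(1/q) with h1 = x^(s1-1), h2 = x^(s2-1) w,
   s1 = 3(q-p)/(q-1), s2 = 3p, Hölder's inequality bounds |F(b) - F(a)| by
   (∫h1)^(1-1/q) (∫h2)^(1/q), and both integrals are computed in closed form
   through logarithmic means.

   Everything is done with explicit antiderivatives instead of integrals:
   the mean value theorem turns a pointwise bound |F'| <= G' into
   |F(b) - F(a)| <= G(b) - G(a) (deriv_dominated), and Hölder's inequality is
   obtained from the weighted AM-GM inequality applied to a suitable G
   (holder_antideriv). *)

Lemma rpow_pos_eq x y : 0 < x -> rpow x y = Rpower x y.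
Proof. intro Hx. unfold rpow. destruct (Req_EM_T x 0); [lra | reflexivity]. Qed.

Lemma rpow_ge0 x y : 0 <= rpow x y.
Proof.
  unfold rpow, Rpower. destruct (Req_EM_T x 0); [destruct (Req_EM_T y 0); lra |].
  left; apply exp_pos.
Qed.

Lemma rpow_0_l y : y <> 0 -> rpow 0 y = 0.
Proof.
  intro Hy. unfold rpow. destruct (Req_EM_T 0 0); [| lra].
  destruct (Req_EM_T y 0); lra.
Qed.

Lemma rpow_1 x : 0 <= x -> rpow x 1 = x.
Proof.
  intro Hx. destruct (Req_dec x 0) as [-> | Hx0]; [apply rpow_0_l; lra |].
  rewrite rpow_pos_eq by lra. apply Rpower_1; lra.
Qed.

Lemma rpow_mult_distr x y z : 0 <= x -> 0 <= y -> z <> 0 ->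
  rpow (x * y) z = rpow x z * rpow y z.
Proof.
  intros Hx Hy Hz.
  destruct (Req_dec x 0) as [-> | Hx0]; [rewrite Rmult_0_l, rpow_0_l; auto; ring |].
  destruct (Req_dec y 0) as [-> | Hy0]; [rewrite Rmult_0_r, rpow_0_l; auto; ring |].
  rewrite !rpow_pos_eq by nra. rewrite Rpower_mult_distr; lra.
Qed.

Lemma rpow_rpow_inv y q : 0 <= y -> 0 < q -> rpow (rpow y q) (1 / q) = y.
Proof.
  intros Hy Hq. destruct (Req_dec y 0) as [-> | Hy0].
  { rewrite (rpow_0_l q) by lra. apply rpow_0_l.
    apply Rgt_not_eq, Rdiv_lt_0_compat; lra. }
  rewrite (rpow_pos_eq y q), rpow_pos_eq by (try unfold Rpower; try apply exp_pos; lra).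
  rewrite Rpower_mult. replace (q * (1 / q)) with 1 by (field; lra).
  apply Rpower_1; lra.
Qed.

Lemma rpow_le_compat_l x y z : 0 <= x <= y -> 0 < z -> rpow x z <= rpow y z.
Proof.
  intros Hxy Hz. destruct (Req_dec x 0) as [-> | Hx0].
  { rewrite rpow_0_l by lra. apply rpow_ge0. }
  rewrite !rpow_pos_eq by lra. apply Rle_Rpower_l; lra.
Qed.

Lemma Rpower_pred x e : 0 < x -> Rpower x e = Rpower x (e - 1) * x.
Proof.
  intro Hx. rewrite <- (Rpower_1 x) at 3 by exact Hx.
  rewrite <- Rpower_plus. f_equal. ring.
Qed.

Lemma rpow_power_split x u e1 e2 al : 0 < x -> 0 <= u -> 0 < al < 1 ->
  rpow (Rpower x e1) (1 - al) * rpow (Rpower x e2 * u) al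
  = Rpower x (e1 * (1 - al) + e2 * al) * rpow u al.
Proof.
  intros Hx Hu Hal. assert (Hpos : forall e, 0 < Rpower x e) by (intro; apply exp_pos).
  rewrite rpow_mult_distr by (try apply Rlt_le, Hpos; lra).
  rewrite !rpow_pos_eq by apply Hpos.
  rewrite !Rpower_mult, Rpower_plus. ring.
Qed.

(* Regrouping the constant of the corollary into Hölder form. *)
Lemma rpow_regroup D L E s e g : 0 <= D -> 0 <= L -> 0 <= E -> 0 < s -> e <> 0 -> g <> 0 ->
  rpow D e / 2 * rpow (1 / s) g * rpow L e * rpow E g
  = rpow (D * L) e * rpow (E / s) g / 2.
Proof.
  intros HD HL HE Hs He Hg.
  replace (E / s) with (1 / s * E) by (field; lra).
  rewrite !rpow_mult_distr by (try apply Rdiv_le_0_compat; lra). field.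
Qed.

Lemma exp_convex l x y : 0 <= l <= 1 ->
  exp (l * x + (1 - l) * y) <= l * exp x + (1 - l) * exp y.
Proof.
  intro Hl. set (c := l * x + (1 - l) * y).
  (* exp lies above its tangent line at c *)
  assert (Htan : forall z, exp c * (1 + (z - c)) <= exp z).
  { intro z. replace (exp z) with (exp c * exp (z - c)) by (rewrite <- exp_plus; f_equal; ring).
    apply Rmult_le_compat_l; [left; apply exp_pos | apply exp_ineq1_le]. }
  pose proof (Htan x) as Hx. pose proof (Htan y) as Hy.
  assert (Hc : l * (exp c * (1 + (x - c))) + (1 - l) * (exp c * (1 + (y - c))) = exp c)
    by (unfold c; ring).
  nra.
Qed.

Lemma young U V al : 0 <= U -> 0 <= V -> 0 < al < 1 ->
  rpow U (1 - al) * rpow V al <= (1 - al) * U + al * V.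
Proof.
  intros HU HV Hal.
  destruct (Req_dec U 0) as [-> | HU0]; [rewrite rpow_0_l by lra; nra |].
  destruct (Req_dec V 0) as [-> | HV0]; [rewrite (rpow_0_l al) by lra; nra |].
  rewrite !rpow_pos_eq by lra. unfold Rpower. rewrite <- exp_plus.
  rewrite <- (exp_ln U) at 2 by lra. rewrite <- (exp_ln V) at 2 by lra.
  replace (al * ln V) with ((1 - (1 - al)) * ln V) by ring.
  replace (al * exp (ln V)) with ((1 - (1 - al)) * exp (ln V)) by ring.
  apply exp_convex; lra.
Qed.

Lemma logmean_bounds A B : 0 < A < B -> A < logmean A B < B.
Proof.
  intro H. unfold logmean. set (d := ln B - ln A).
  assert (Hd : 0 < d) by (unfold d; pose proof (ln_increasing A B); lra).
  assert (EB : B = A * exp d).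
  { unfold d. replace (ln B - ln A) with (ln B + - ln A) by ring.
    rewrite exp_plus, exp_Ropp, !exp_ln by lra. field; lra. }
  assert (EA : A = B * exp (- d)).
  { unfold d. replace (- (ln B - ln A)) with (ln A + - ln B) by ring.
    rewrite exp_plus, exp_Ropp, !exp_ln by lra. field; lra. }
  pose proof (exp_ineq1 d ltac:(lra)). pose proof (exp_ineq1 (- d) ltac:(lra)).
  split; apply (Rmult_lt_reg_r d); try lra;
    unfold Rdiv; rewrite Rmult_assoc, Rinv_l by lra; nra.
Qed.

Lemma logmean_Rpower a b s : 0 < a < b -> 0 < s ->
  s * (ln b - ln a) * logmean (Rpower a s) (Rpower b s) = Rpower b s - Rpower a s.
Proof.
  intros Hab Hs. pose proof (ln_increasing a b ltac:(lra) ltac:(lra)).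
  unfold logmean. rewrite !ln_Rpower. field. nra.
Qed.

Lemma logmean_Rpower_bounds a b s : 0 < a < b -> 0 < s ->
  Rpower a s < logmean (Rpower a s) (Rpower b s) < Rpower b s.
Proof.
  intros Hab Hs. apply logmean_bounds. split; [apply exp_pos | apply Rlt_Rpower_l; lra].
Qed.

(* If |F'| <= G' on [a,b] then |F(b) - F(a)| <= G(b) - G(a): the mean value
   theorem applied to G - F and G + F. *)
Lemma deriv_dominated F F' G G' a b : a < b ->
  (forall x, a <= x <= b -> derivable_pt_lim F x (F' x)) ->
  (forall x, a <= x <= b -> derivable_pt_lim G x (G' x)) ->
  (forall x, a <= x <= b -> Rabs (F' x) <= G' x) ->
  Rabs (F b - F a) <= G b - G a.
Proof.
  intros Hab HF HG Hle.
  destruct (MVT_cor2 (fun x => G x - F x) (fun x => G' x - F' x) a b Hab)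
    as [c [Hc Hc_ab]]; [intros; apply derivable_pt_lim_minus; auto |].
  destruct (MVT_cor2 (fun x => G x + F x) (fun x => G' x + F' x) a b Hab)
    as [d [Hd Hd_ab]]; [intros; apply derivable_pt_lim_plus; auto |].
  pose proof (Hle c ltac:(lra)) as Hlc. pose proof (Hle d ltac:(lra)) as Hld.
  pose proof (Rabs_le_between (F' c) (G' c)). pose proof (Rabs_le_between (F' d) (G' d)).
  apply Rabs_le; nra.
Qed.

Lemma ftc_primitive g a b (Hab : a <= b)
  (Hcont : forall x, a <= x <= b -> continuity_pt g x)
  (pr : Riemann_integrable g a b) :
  exists P, (forall x, a <= x <= b -> derivable_pt_lim P x (g x)) /\
            RiemannInt pr = P b - P a.
Proof.
  exists (primitive Hab (FTC_P1 Hab Hcont)). split.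
  - intros x Hx. exact (RiemannInt_P28 Hab Hcont Hx).
  - unfold primitive.
    destruct (Rle_dec a b) as [Hab' |]; [| exfalso; lra].
    destruct (Rle_dec b b) as [Hbb |]; [| exfalso; lra].
    destruct (Rle_dec a a) as [Haa |]; [| exfalso; lra].
    rewrite RiemannInt_P9, (RiemannInt_P5 pr (FTC_P1 Hab Hcont Hab' Hbb)). ring.
Qed.

(* Hölder's inequality in antiderivative form: if |F'| <= h1^(1-al) h2^al
   with h1, h2 >= 0 having antiderivatives H1, H2, then
   |F(b) - F(a)| <= (H1(b) - H1(a))^(1-al) (H2(b) - H2(a))^al.
   With P, Q these increments and K = P^(1-al) Q^al, the function
   G = K ((1-al) H1 / P + al H2 / Q) satisfies |F'| <= G' by Young's
   inequality, and G(b) - G(a) = K. *)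
Lemma holder_antideriv F F' H1 h1 H2 h2 a b al : a < b -> 0 < al < 1 ->
  (forall x, a <= x <= b -> derivable_pt_lim F x (F' x)) ->
  (forall x, a <= x <= b -> derivable_pt_lim H1 x (h1 x)) ->
  (forall x, a <= x <= b -> derivable_pt_lim H2 x (h2 x)) ->
  (forall x, a <= x <= b -> 0 <= h1 x /\ 0 <= h2 x /\
     Rabs (F' x) <= rpow (h1 x) (1 - al) * rpow (h2 x) al) ->
  0 < H1 b - H1 a -> 0 < H2 b - H2 a ->
  Rabs (F b - F a) <= rpow (H1 b - H1 a) (1 - al) * rpow (H2 b - H2 a) al.
Proof.
  intros Hab Hal HF HH1 HH2 Hdom HP HQ.
  set (P := H1 b - H1 a) in *. set (Q := H2 b - H2 a) in *.
  set (K := rpow P (1 - al) * rpow Q al).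
  set (G := fun y => K * ((1 - al) / P * H1 y + al / Q * H2 y)).
  replace K with (G b - G a).
  2:{ unfold G. transitivity (K * ((1 - al) / P * P + al / Q * Q)); [unfold P, Q; ring |].
      field; lra. }
  apply (deriv_dominated F F' G (fun x => K * ((1 - al) / P * h1 x + al / Q * h2 x))
           a b Hab HF).
  - intros x Hx. apply (derivable_pt_lim_scal (fun y => _ * H1 y + _ * H2 y)).
    apply (derivable_pt_lim_plus (fun y => _ * H1 y) (fun y => _ * H2 y)).
    + apply (derivable_pt_lim_scal H1), HH1, Hx.
    + apply (derivable_pt_lim_scal H2), HH2, Hx.
  - intros x Hx. destruct (Hdom x Hx) as [Hh1 [Hh2 HFx]].
    assert (Hsplit : rpow (h1 x) (1 - al) * rpow (h2 x) al
                     = K * (rpow (h1 x / P) (1 - al) * rpow (h2 x / Q) al)).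
    { assert (E1 : h1 x = P * (h1 x / P)) by (field; lra).
      assert (E2 : h2 x = Q * (h2 x / Q)) by (field; lra).
      rewrite E1 at 1. rewrite E2 at 1.
      rewrite !rpow_mult_distr by (try apply Rdiv_le_0_compat; lra).
      unfold K; ring. }
    pose proof (young (h1 x / P) (h2 x / Q) al
                  ltac:(apply Rdiv_le_0_compat; lra) ltac:(apply Rdiv_le_0_compat; lra) Hal).
    assert (HK : 0 <= K) by (apply Rmult_le_pos; apply rpow_ge0).
    rewrite Hsplit in HFx. apply (Rle_trans _ _ _ HFx).
    replace ((1 - al) / P * h1 x + al / Q * h2 x)
      with ((1 - al) * (h1 x / P) + al * (h2 x / Q)) by (field; lra).
    apply Rmult_le_compat_l; assumption.
Qed.

(* The coordinate t of x in [a,b] for which x = b^(1-t) a^t. *)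
Definition log_coord (a b x : R) : R := (ln b - ln x) / (ln b - ln a).

Lemma log_coord_range a b x : 0 < a -> a < b -> a <= x <= b ->
  0 <= log_coord a b x <= 1.
Proof.
  intros Ha Hab Hx. unfold log_coord.
  pose proof (ln_increasing a b Ha Hab).
  pose proof (ln_le a x Ha (proj1 Hx)). pose proof (ln_le x b ltac:(lra) (proj2 Hx)).
  split; [apply Rdiv_le_0_compat; lra |].
  apply (Rmult_le_reg_r (ln b - ln a)); [lra |].
  unfold Rdiv. rewrite Rmult_assoc, Rinv_l by lra. lra.
Qed.

Lemma log_coord_point a b x : 0 < a -> a < b -> 0 < x ->
  x = Rpower b (1 - log_coord a b x) * Rpower a (log_coord a b x).
Proof.
  intros Ha Hab Hx. pose proof (ln_increasing a b Ha Hab).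
  unfold Rpower, log_coord. rewrite <- exp_plus, <- (exp_ln x) at 1 by exact Hx.
  f_equal. field. lra.
Qed.

(* Interpolation bound for a (1,m)-GA-convex h: since
   x = b^(1-t) (a^(1/m))^(m t) with t = log_coord a b x, we get
   h(x) <= (1-t) h(b) + m t h(a^(1/m)). *)
Lemma GA_convex_log_interp h m c a b x : 0 < m -> 0 < a -> a < b -> a <= x <= b ->
  rpow a (1 / m) <= c -> b <= c -> GA_convex 1 m c h ->
  h x <= (1 - log_coord a b x) * h b + m * log_coord a b x * h (rpow a (1 / m)).
Proof.
  intros Hm Ha Hab Hx Hac Hbc Hconv.
  pose proof (log_coord_range a b x Ha Hab Hx) as Ht.
  set (t := log_coord a b x) in *.
  assert (Ham : 0 < rpow a (1 / m)) by (rewrite rpow_pos_eq by lra; apply exp_pos).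
  pose proof (Hconv b (rpow a (1 / m)) (1 - t) ltac:(lra) ltac:(lra) ltac:(lra)) as Hh.
  rewrite rpow_1 in Hh by lra.
  replace (rpow b (1 - t) * rpow (rpow a (1 / m)) (m * (1 - (1 - t)))) with x in Hh;
    [lra |].
  rewrite (rpow_pos_eq b), (rpow_pos_eq (rpow a (1 / m))), (rpow_pos_eq a) by lra.
  rewrite Rpower_mult. replace (1 / m * (m * (1 - (1 - t)))) with t by (field; lra).
  apply log_coord_point; lra.
Qed.

Section PowerWeights.

Variables a b s : R.
Hypotheses (Ha : 0 < a) (Hab : a < b) (Hs : 0 < s).

Lemma power_antideriv x : 0 < x ->
  derivable_pt_lim (fun y => Rpower y s / s) x (Rpower x (s - 1)).
Proof.
  intro Hx. apply is_derive_Reals.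
  replace (Rpower x (s - 1)) with (Rpower x s / x) by (rewrite (Rpower_pred x s Hx); field; lra).
  unfold Rpower. auto_derive; [lra | field; lra].
Qed.

Definition log_power_prim (y : R) : R :=
  Rpower y s * (log_coord a b y / s + / (s * s * (ln b - ln a))).

Lemma log_power_antideriv x : 0 < x ->
  derivable_pt_lim log_power_prim x (Rpower x (s - 1) * log_coord a b x).
Proof.
  intro Hx. pose proof (ln_increasing a b Ha Hab). apply is_derive_Reals.
  replace (Rpower x (s - 1)) with (Rpower x s / x) by (rewrite (Rpower_pred x s Hx); field; lra).
  unfold log_power_prim, log_coord, Rpower. auto_derive; [lra | field; lra].
Qed.

Lemma power_increment :
  Rpower b s / s - Rpower a s / s = (ln b - ln a) * logmean (Rpower a s) (Rpower b s).
Proof.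
  replace (Rpower b s / s - Rpower a s / s) with ((Rpower b s - Rpower a s) / s)
    by (field; lra).
  rewrite <- (logmean_Rpower a b s) by lra. field. lra.
Qed.

Lemma log_power_increment :
  log_power_prim b - log_power_prim a = (logmean (Rpower a s) (Rpower b s) - Rpower a s) / s.
Proof.
  pose proof (ln_increasing a b Ha Hab).
  assert (HL : logmean (Rpower a s) (Rpower b s)
               = (Rpower b s - Rpower a s) / (s * (ln b - ln a))).
  { rewrite <- (logmean_Rpower a b s) by lra. field. lra. }
  rewrite HL. unfold log_power_prim, log_coord. field. lra.
Qed.

End PowerWeights.

Section Corollary.

Variables (f f' : R -> R) (a b m p q : R).
Hypotheses (Hder : forall x, 0 < x -> derivable_pt_lim f x (f' x))
  (Ha : 0 < a) (Hab : a < b) (Hm : 0 < m <= 1) (Hq : 1 < q) (Hp : 0 < p < q)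
  (Hconv : GA_convex 1 m (Rmax (rpow a (1 / m)) b) (fun x => rpow (Rabs (f' x)) q)).

Let s1 := 3 * (q - p) / (q - 1).
Let s2 := 3 * p.
Let Ma := rpow (Rabs (f' (rpow a (1 / m)))) q.
Let Mb := rpow (Rabs (f' b)) q.

(* The majorant of |f'|^q on [a,b] given by GA-convexity. *)
Let w (x : R) : R := (1 - log_coord a b x) * Mb + m * log_coord a b x * Ma.

Lemma abs_deriv_bound x : a <= x <= b -> 0 <= w x /\ Rabs (f' x) <= rpow (w x) (1 / q).
Proof.
  intro Hx.
  assert (Hw : rpow (Rabs (f' x)) q <= w x).
  { apply (GA_convex_log_interp (fun y => rpow (Rabs (f' y)) q) m
             (Rmax (rpow a (1 / m)) b)); try lra; auto.
    - apply Rmax_l.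
    - apply Rmax_r. }
  pose proof (rpow_ge0 (Rabs (f' x)) q). split; [lra |].
  rewrite <- (rpow_rpow_inv (Rabs (f' x)) q) by (try apply Rabs_pos; lra).
  apply rpow_le_compat_l; [lra | apply Rdiv_lt_0_compat; lra].
Qed.

Variable Prim : R -> R.
Hypothesis HPrim : forall x, a <= x <= b -> derivable_pt_lim Prim x (x * f x).

Let F (y : R) : R := y ^ 2 * f y - 2 * Prim y.

Lemma F_deriv x : a <= x <= b -> derivable_pt_lim F x (x ^ 2 * f' x).
Proof.
  intro Hx.
  pose proof (derivable_pt_lim_mult _ _ _ _ _ (derivable_pt_lim_pow x 2) (Hder x ltac:(lra)))
    as Hprod.
  pose proof (derivable_pt_lim_minus _ _ _ _ _ Hprod
                (derivable_pt_lim_scal _ 2 _ _ (HPrim x Hx))) as Hdiff.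
  replace (x ^ 2 * f' x)
    with (INR 2 * x ^ Init.Nat.pred 2 * f x + x ^ 2 * f' x - 2 * (x * f x))
    by (simpl; ring).
  exact Hdiff.
Qed.

Let L1 := logmean (rpow a s1) (rpow b s1).
Let L2 := logmean (rpow a s2) (rpow b s2).
Let E := m * (L2 - rpow a s2) * Ma + (rpow b s2 - L2) * Mb.

Lemma exponents_pos : 0 < s1 /\ 0 < s2 /\ 0 < 1 / q < 1.
Proof.
  split; [unfold s1; apply Rdiv_lt_0_compat; lra |]. split; [unfold s2; lra |].
  split; [apply Rdiv_lt_0_compat; lra |].
  apply (Rmult_lt_reg_r q); [lra |]. unfold Rdiv. rewrite Rmult_assoc, Rinv_l; lra.
Qed.

Lemma L1_pos : 0 < L1.
Proof.
  destruct exponents_pos as [Hs1 _]. unfold L1. rewrite !rpow_pos_eq by lra.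
  pose proof (logmean_Rpower_bounds a b s1 (conj Ha Hab) Hs1).
  pose proof (exp_pos (s1 * ln a)). unfold Rpower in *. lra.
Qed.

(* E is a combination of Ma and Mb with positive coefficients. *)
Lemma E_pos : 0 < Ma + Mb -> 0 < E.
Proof.
  intro HM. destruct exponents_pos as [_ [Hs2 _]].
  assert (HMa : 0 <= Ma) by apply rpow_ge0. assert (HMb : 0 <= Mb) by apply rpow_ge0.
  pose proof (logmean_Rpower_bounds a b s2 (conj Ha Hab) Hs2) as HL2.
  unfold E, L2. rewrite !rpow_pos_eq by lra.
  set (L := logmean (Rpower a s2) (Rpower b s2)) in *.
  assert (Hc1 : 0 < m * (L - Rpower a s2)) by (apply Rmult_lt_0_compat; lra).
  assert (Hc2 : 0 < Rpower b s2 - L) by lra.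
  destruct (Rle_lt_or_eq_dec 0 Ma HMa) as [HMa' | <-].
  - pose proof (Rmult_lt_0_compat _ _ Hc1 HMa').
    pose proof (Rmult_le_pos _ _ (Rlt_le _ _ Hc2) HMb). lra.
  - pose proof (Rmult_lt_0_compat _ Mb Hc2 ltac:(lra)). lra.
Qed.

Lemma E_nonneg : 0 <= E.
Proof.
  assert (HMa : 0 <= Ma) by apply rpow_ge0. assert (HMb : 0 <= Mb) by apply rpow_ge0.
  destruct (Rle_lt_or_eq_dec 0 (Ma + Mb) ltac:(lra)) as [HM | HM];
    [apply Rlt_le, E_pos, HM |].
  unfold E. replace Ma with 0 by lra. replace Mb with 0 by lra. lra.
Qed.

(* The main case: Hölder's inequality with the weights h1(x) = x^(s1-1) and
   h2(x) = x^(s2-1) w(x), whose integrals over [a,b] are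
   (ln b - ln a) L1 and E / s2. *)
Lemma holder_estimate : 0 < Ma + Mb ->
  Rabs (F b - F a) <= rpow ((ln b - ln a) * L1) (1 - 1 / q) * rpow (E / s2) (1 / q).
Proof.
  intro HM. destruct exponents_pos as [Hs1 [Hs2 Hal]].
  pose proof (ln_increasing a b Ha Hab) as Hln.
  set (H1 := fun y => Rpower y s1 / s1).
  set (H2 := fun y => Mb * (Rpower y s2 / s2) + (m * Ma - Mb) * log_power_prim a b s2 y).
  assert (HI1 : H1 b - H1 a = (ln b - ln a) * L1).
  { unfold L1. rewrite !rpow_pos_eq by lra. apply power_increment; lra. }
  assert (HI2 : H2 b - H2 a = E / s2).
  { unfold H2. transitivity (Mb * (Rpower b s2 / s2 - Rpower a s2 / s2)
                  + (m * Ma - Mb) * (log_power_prim a b s2 b - log_power_prim a b s2 a));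
      [ring |].
    rewrite power_increment, log_power_increment by lra.
    pose proof (logmean_Rpower a b s2 (conj Ha Hab) Hs2) as HLs.
    unfold E, L2. rewrite !rpow_pos_eq by lra.
    set (L := logmean (Rpower a s2) (Rpower b s2)) in *.
    replace (Rpower b s2) with (Rpower a s2 + s2 * (ln b - ln a) * L) by lra.
    field. lra. }
  rewrite <- HI1, <- HI2.
  apply (holder_antideriv F (fun x => x ^ 2 * f' x) H1 (fun x => Rpower x (s1 - 1)) H2
           (fun x => Mb * Rpower x (s2 - 1) + (m * Ma - Mb) * (Rpower x (s2 - 1) * log_coord a b x))
           a b (1 / q) Hab Hal F_deriv).
  - intros x Hx. apply power_antideriv; lra.
  - intros x Hx.
    apply (derivable_pt_lim_plus (fun y => Mb * _) (fun y => (m * Ma - Mb) * _)).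
    + apply (derivable_pt_lim_scal (fun y => Rpower y s2 / s2)), power_antideriv; lra.
    + apply (derivable_pt_lim_scal (log_power_prim a b s2)), log_power_antideriv; lra.
  - intros x Hx. destruct (abs_deriv_bound x Hx) as [Hw Hf'].
    assert (Hx0 : 0 < x) by lra.
    replace (Mb * Rpower x (s2 - 1) + (m * Ma - Mb) * (Rpower x (s2 - 1) * log_coord a b x))
      with (Rpower x (s2 - 1) * w x) by (unfold w; ring).
    assert (Hpw : forall e, 0 < Rpower x e) by (intro; apply exp_pos).
    split; [left; apply Hpw | split; [apply Rmult_le_pos; [left; apply Hpw | lra] |]].
    (* x^(s1-1)(1-1/q) * x^(s2-1)/q = x^2 *)
    rewrite rpow_power_split by lra.
    replace ((s1 - 1) * (1 - 1 / q) + (s2 - 1) * (1 / q)) with (INR 2)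
      by (unfold s1, s2; simpl; field; lra).
    rewrite Rpower_pow, Rabs_mult, (Rabs_pos_eq (x ^ 2)) by (try apply pow2_ge_0; lra).
    apply Rmult_le_compat_l; [apply pow2_ge_0 | exact Hf'].
  - rewrite HI1. apply Rmult_lt_0_compat; [lra | exact L1_pos].
  - rewrite HI2. apply Rdiv_lt_0_compat; [exact (E_pos HM) | lra].
Qed.

(* The degenerate case: if |f'(b)| = |f'(a^(1/m))| = 0 then the majorant w
   vanishes, hence f' = 0 on [a,b] and F is constant there. *)
Lemma degenerate_estimate : Ma + Mb = 0 -> Rabs (F b - F a) <= 0.
Proof.
  intro HM.
  assert (HMa : 0 <= Ma) by apply rpow_ge0. assert (HMb : 0 <= Mb) by apply rpow_ge0.
  replace 0 with ((fun _ : R => 0) b - (fun _ : R => 0) a) by ring.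
  apply (deriv_dominated F (fun x => x ^ 2 * f' x) _ (fun _ => 0) a b Hab F_deriv).
  - intros. apply derivable_pt_lim_const.
  - intros x Hx. destruct (abs_deriv_bound x Hx) as [_ Hf'].
    replace (w x) with 0 in Hf' by (unfold w; replace Ma with 0 by lra;
                                       replace Mb with 0 by lra; ring).
    rewrite rpow_0_l in Hf' by (apply Rgt_not_eq, Rdiv_lt_0_compat; lra).
    cbv beta. rewrite Rabs_mult. pose proof (Rabs_pos (x ^ 2)). pose proof (Rabs_pos (f' x)).
    nra.
Qed.

Lemma main_estimate :
  Rabs ((b ^ 2 * f b - a ^ 2 * f a) / 2 - (Prim b - Prim a))
  <= rpow (ln b - ln a) (1 - 1 / q) / 2 * rpow (1 / s2) (1 / q)
     * rpow L1 (1 - 1 / q) * rpow E (1 / q).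
Proof.
  destruct exponents_pos as [_ [Hs2 Hal]].
  pose proof (ln_increasing a b Ha Hab).
  rewrite rpow_regroup by (try apply Rlt_le, L1_pos; try apply E_nonneg; lra).
  replace ((b ^ 2 * f b - a ^ 2 * f a) / 2 - (Prim b - Prim a)) with ((F b - F a) / 2)
    by (unfold F; field).
  rewrite Rabs_div, (Rabs_pos_eq 2) by lra. apply Rmult_le_compat_r; [lra |].
  assert (HMa : 0 <= Ma) by apply rpow_ge0. assert (HMb : 0 <= Mb) by apply rpow_ge0.
  destruct (Rle_lt_or_eq_dec 0 (Ma + Mb) ltac:(lra)) as [HM | HM].
  - exact (holder_estimate HM).
  - apply (Rle_trans _ 0); [exact (degenerate_estimate (eq_sym HM)) |].
    apply Rmult_le_pos; apply rpow_ge0.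
Qed.

End Corollary.

(* The integral is the increment of a primitive of x f(x) (continuous since f
   is differentiable). *)
Theorem corollary3p6
  (f f' : R -> R) (a b m p q : R)
  (Hder0 : right_deriv f 0 (f' 0))
  (Hder : forall x, 0 < x -> derivable_pt_lim f x (f' x))
  (Ha : 0 < a) (Hab : a < b)
  (Hm : 0 < m <= 1) (Hq : 1 < q) (Hp : 0 < p < q)
  (Hconv : GA_convex 1 m (Rmax (rpow a (1 / m)) b)
             (fun x => rpow (Rabs (f' x)) q))
  (pr : Riemann_integrable (fun x => x * f x) a b) :
  Rabs ((b ^ 2 * f b - a ^ 2 * f a) / 2 - RiemannInt pr)
  <= rpow (ln b - ln a) (1 - 1 / q) / 2
     * rpow (1 / (3 * p)) (1 / q)
     * rpow (logmean (rpow a (3 * (q - p) / (q - 1)))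
                     (rpow b (3 * (q - p) / (q - 1)))) (1 - 1 / q)
     * rpow (m * (logmean (rpow a (3 * p)) (rpow b (3 * p)) - rpow a (3 * p))
               * rpow (Rabs (f' (rpow a (1 / m)))) q
             + (rpow b (3 * p) - logmean (rpow a (3 * p)) (rpow b (3 * p)))
               * rpow (Rabs (f' b)) q) (1 / q).
Proof.
  assert (Hcont : forall x, a <= x <= b -> continuity_pt (fun y => y * f y) x).
  { intros x Hx. apply (continuity_pt_mult (fun y => y) f).
    - apply derivable_continuous_pt. exists 1. apply derivable_pt_lim_id.
    - apply derivable_continuous_pt. exists (f' x). apply Hder; lra. }
  destruct (ftc_primitive _ a b (Rlt_le _ _ Hab) Hcont pr) as [Prim [HPrim ->]].
  exact (main_estimate f f' a b m p q Hder Ha Hab Hm Hq Hp Hconv Prim HPrim).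
Qed.
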